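(* Let $\lambda>0$ and set $\Lambda=-3\lambda$. Let $m,a,q\in\mathbb{R}$ be parameters with $\lambda a^2<1$, put $\Xi=1-\lambda a^2>0$ and $$\Delta_r=(r^2+a^2)(1+\lambda r^2)-2mr+q^2 .$$ Assume that the Kerr-Newman-anti-de Sitter solution with these parameters is a black hole, i.e. that the quartic $\Delta_r$ has real zeros, namely either two distinct real zeros $r_1<r_2$ or one real double zero $r_1=r_2$. Define the angular momentum $J=ma/\Xi^2$, the electric charge $Q=q/\Xi$, and the reduced areas of the Cauchy and event horizons $$\bar A_{\mathrm C}=\frac{r_1^2+a^2}{\Xi},\qquad \bar A_{\mathrm E}=\frac{r_2^2+a^2}{\Xi}.$$ The actual horizon areas are $A_{\mathrm C}=4\pi\bar A_{\mathrm C}$ and $A_{\mathrm E}=4\pi\bar A_{\mathrm E}$. Then $$4J^2+Q^4=\bar A_{\mathrm C}\bar A_{\mathrm E}\Big[1+2\lambda\big(\bar A_{\mathrm C}+\bar A_{\mathrm E}+Q^2\big)+\lambda^2\big(\bar A_{\mathrm C}^2+\bar A_{\mathrm C}\bar A_{\mathrm E}+\bar A_{\mathrm E}^2\big)\Big].$$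
   Context: The Kerr-Newman-anti-de Sitter (KN-AdS) solution with cosmological constant $\Lambda=-3\lambda<0$ is written in Boyer-Lindquist-type coordinates $(r,\theta,\phi,t)$ as $$\mathrm ds^2=\varrho^2\Big(\frac{\mathrm dr^2}{\Delta_r}+\frac{\mathrm d\theta^2}{\Delta_\theta}\Big)+\frac{\Delta_\theta\sin^2\theta}{\Xi^2\varrho^2}\big[a\,\mathrm dt-(r^2+a^2)\,\mathrm d\phi\big]^2-\frac{\Delta_r}{\Xi^2\varrho^2}\big(\mathrm dt-a\sin^2\theta\,\mathrm d\phi\big)^2 .$$ Here $\varrho^2=r^2+a^2\cos^2\theta$ and $\Delta_\theta=1-\lambda a^2\cos^2\theta$. The electromagnetic potential is $A=-\frac{qr}{\varrho^2}(\mathrm dt-a\sin^2\theta\,\mathrm d\phi)$. The parameter $m$ is the mass parameter, $a$ the rotation parameter and $q$ the charge parameter. The mass is $M=m/\Xi^2$. For $\lambda>0$ the quartic $\Delta_r$ has at most two real zeros. The larger zero $r_2$ gives the event horizon and the smaller zero $r_1$ gives the Cauchy horizon. The black hole is degenerate exactly when $r_1=r_2$. *)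

(* the statement is pure algebra over an arbitrary real field. *)
From HB Require Import structures.
From mathcomp Require Import all_boot all_order all_algebra.
Set Implicit Arguments. Unset Strict Implicit. Unset Printing Implicit Defensive.
Import Order.TTheory GRing.Theory Num.Theory.
Local Open Scope ring_scope.

Definition DeltaR {R : realFieldType} (lam a m q : R) : {poly R} :=
  ('X^2 + (a ^+ 2)%:P) * (1 + lam%:P * 'X^2) - (2 * m)%:P * 'X + (q ^+ 2)%:P.

Definition Xi {R : realFieldType} (lam a : R) : R := 1 - lam * a ^+ 2.

Definition AngJ {R : realFieldType} (lam a m : R) : R := m * a / (Xi lam a) ^+ 2.

Definition ChargeQ {R : realFieldType} (lam a q : R) : R := q / Xi lam a.

Definition Abar {R : realFieldType} (lam a r : R) : R := (r ^+ 2 + a ^+ 2) / Xi lam a.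

From HB Require Import structures.
From mathcomp Require Import all_boot all_order all_algebra.
From mathcomp Require Import ring.
Import Order.TTheory GRing.Theory Num.Theory.
Local Open Scope ring_scope.

(* Two horizon radii determine the mass and the charge parameters: since
   Delta_r(r1) = Delta_r(r2) = 0, the divided difference of Delta_r at (r1, r2)
   vanishes (for r1 = r2 this is Delta_r'(r1) = 0), which expresses 2m as a
   symmetric function of r1, r2; then Delta_r(r1) = 0 gives q^2.  Substituting
   both, the area identity is an identity of rational functions in r1, r2, a
   and lambda whose only denominator is a power of Xi. *)

Section HorizonRadii.

Variable R : realFieldType.

Definition DeltaR_divdiff (lam a m r1 r2 : R) : R :=
  (r1 + r2) * (lam * (r1 ^+ 2 + r2 ^+ 2) + 1 + lam * a ^+ 2) - 2 * m.

Lemma DeltaR_horner (lam a m q r : R) :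
  (DeltaR lam a m q).[r] =
    lam * r ^+ 4 + (1 + lam * a ^+ 2) * r ^+ 2 - 2 * m * r + a ^+ 2 + q ^+ 2.
Proof. by rewrite /DeltaR !hornerE /=; ring. Qed.

Lemma DeltaR_hornerB (lam a m q r1 r2 : R) :
  (DeltaR lam a m q).[r1] - (DeltaR lam a m q).[r2] =
    (r1 - r2) * DeltaR_divdiff lam a m r1 r2.
Proof. by rewrite !DeltaR_horner /DeltaR_divdiff; ring. Qed.

Lemma deriv_DeltaR_horner (lam a m q r : R) :
  (DeltaR lam a m q)^`().[r] = DeltaR_divdiff lam a m r r.
Proof. by rewrite /DeltaR /DeltaR_divdiff !derivE !hornerE /=; ring. Qed.

Lemma DeltaR_divdiff_eq0 (lam a m q r1 r2 : R) :
  root (DeltaR lam a m q) r1 -> root (DeltaR lam a m q) r2 ->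
  (r1 = r2 -> root (DeltaR lam a m q)^`() r1) ->
  DeltaR_divdiff lam a m r1 r2 = 0.
Proof.
move=> /eqP root1 /eqP root2 double.
have [eq12 | neq12] := eqVneq r1 r2.
  by move/eqP: (double eq12); rewrite deriv_DeltaR_horner eq12.
apply: (mulfI (_ : r1 - r2 != 0)); first by rewrite subr_eq0.
by rewrite -(DeltaR_hornerB _ _ _ q) root1 root2 subr0 mulr0.
Qed.

Lemma reduced_area_identity (lam m a q r1 r2 : R) :
  Xi lam a != 0 ->
  DeltaR_divdiff lam a m r1 r2 = 0 ->
  q ^+ 2 = - (lam * r1 ^+ 4 + (1 + lam * a ^+ 2) * r1 ^+ 2 - 2 * m * r1 + a ^+ 2) ->
  let AC := Abar lam a r1 in
  let AE := Abar lam a r2 in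
  let J := AngJ lam a m in
  let Q := ChargeQ lam a q in
  4 * J ^+ 2 + Q ^+ 4 =
    AC * AE * (1 + 2 * lam * (AC + AE + Q ^+ 2)
               + lam ^+ 2 * (AC ^+ 2 + AC * AE + AE ^+ 2)).
Proof.
move=> Xi_neq0 divdiff0 q2_eq AC AE J Q.
have m_eq : m = (r1 + r2) * (lam * (r1 ^+ 2 + r2 ^+ 2) + 1 + lam * a ^+ 2) / 2.
  by move/eqP: divdiff0; rewrite /DeltaR_divdiff subr_eq0 => /eqP ->; field.
have q4_eq : q ^+ 4 = (q ^+ 2) ^+ 2 by rewrite -exprM.
move: Xi_neq0; rewrite /AC /AE /J /Q /Abar /AngJ /ChargeQ /Xi.
by rewrite !expr_div_n q4_eq q2_eq m_eq => Xi_neq0; field.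
Qed.

End HorizonRadii.

Theorem mainTheorem1 (R : realFieldType) (lam m a q r1 r2 : R) :
  0 < lam -> lam * a ^+ 2 < 1 ->
  (* black hole: r1 <= r2 are the real zeros of Delta_r (Cauchy and event horizons) *)
  r1 <= r2 ->
  root (DeltaR lam a m q) r1 -> root (DeltaR lam a m q) r2 ->
  (forall r : R, root (DeltaR lam a m q) r -> r = r1 \/ r = r2) ->
  (* in the degenerate case r1 = r2 the zero is double *)
  (r1 = r2 -> root (DeltaR lam a m q)^`() r1) ->
  let AC := Abar lam a r1 in
  let AE := Abar lam a r2 in
  let J := AngJ lam a m in
  let Q := ChargeQ lam a q in
  4 * J ^+ 2 + Q ^+ 4 =
    AC * AE * (1 + 2 * lam * (AC + AE + Q ^+ 2)
               + lam ^+ 2 * (AC ^+ 2 + AC * AE + AE ^+ 2)).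
Proof.
move=> _ lam_a2_lt1 _ root1 root2 _ double.
apply: reduced_area_identity.
- by rewrite /Xi subr_eq0 eq_sym lt_eqF.
- exact: DeltaR_divdiff_eq0 root1 root2 double.
- move/eqP: root1; rewrite DeltaR_horner => Delta_r1.
  by apply/eqP; rewrite -subr_eq0 opprK addrC Delta_r1.
Qed.
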